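(* For $\alpha>0$ set $$H_\alpha(t)=\frac\alpha2\operatorname{sinc}^2\!\left(\frac{\alpha t}{2}\right)+\frac\alpha4\left[\operatorname{sinc}^2\!\left(\frac{\alpha t-\pi}{2}\right)+\operatorname{sinc}^2\!\left(\frac{\alpha t+\pi}{2}\right)\right]$$ and $G_\alpha(x)=\frac1\pi\int_0^\infty H_\alpha(t)\cos(tx)\,dt$ for $x\ge0$. Then $G_\alpha$ is supported on $[0,\alpha]$, $G_\alpha(0)=1$, and $H_\alpha(t)\ge\frac{2\alpha}{\max((\alpha t)^2,\pi^2/3)}$ for all $t\in\mathbb{R}$.
   Context: $\operatorname{sinc}(x)=\frac{\sin x}{x}$ for $x\ne0$ and $\operatorname{sinc}(0)=1$. *)

From Stdlib Require Import Reals.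
From Coquelicot Require Import Coquelicot.
Open Scope R_scope.

Definition sinc (x : R) : R := if Req_EM_T x 0 then 1 else sin x / x.

Definition H_alpha (alpha t : R) : R :=
  alpha / 2 * (sinc (alpha * t / 2)) ^ 2
  + alpha / 4 * ((sinc ((alpha * t - PI) / 2)) ^ 2 + (sinc ((alpha * t + PI) / 2)) ^ 2).

Definition G_alpha (alpha x : R) : R :=
  / PI * RInt_gen (fun t => H_alpha alpha t * cos (t * x))
                  (at_point 0) (Rbar_locally p_infty).

From Stdlib Require Import Reals Lra Lia.
From Coquelicot Require Import Coquelicot.
Open Scope R_scope.

(* The cosine transform of sinc^2 (c s) is a triangle function.  This follows from
   int_0^oo sinc^2 = PI/2, obtained by comparing n^2 sinc^2 (n u) with the Fejer kernel
   sin^2 (n u) / sin^2 u on (0, PI/2), together with the identity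
   2 sin^2 A cos 2B = sin^2 (A + B) + sin^2 (A - B) - 2 sin^2 B.  The two shifted terms of
   H_alpha contribute cos (PI x / alpha) times the same triangle, since on translating back
   their odd parts cancel up to a window integral that vanishes at infinity.  Hence
   G_alpha x = alpha / (2 PI) (1 + cos (PI x / alpha)) * triangle, which vanishes for
   x > alpha and equals 1 at 0.

   For the lower bound, H_alpha alpha t = alpha/2 * H_alpha 2 (alpha t / 2).  With a = PI/2,
   v = u^2 and s = sinc^2 u one has sinc^2 (u -+ a) = cos^2 u / (u -+ a)^2, so
   H_alpha 2 u = s + (1 - v s) (v + a^2) / (a^2 - v)^2.  This is >= 1/v when 3 v >= a^2
   (as v s = sin^2 u <= 1), and >= 3/a^2 when 3 v <= a^2 (as sin u >= u - u^3/6). *)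

Lemma continuous_scal_R (f : R -> R) k t : continuous f t -> continuous (fun s => k * f s) t.
Proof. exact (continuous_scal_r k f t). Qed.

Lemma continuous_plus_R (f g : R -> R) t :
  continuous f t -> continuous g t -> continuous (fun s => f s + g s) t.
Proof. exact (continuous_plus f g t). Qed.

Lemma continuous_minus_R (f g : R -> R) t :
  continuous f t -> continuous g t -> continuous (fun s => f s - g s) t.
Proof. exact (continuous_minus f g t). Qed.

Lemma continuous_mult_R (f g : R -> R) t :
  continuous f t -> continuous g t -> continuous (fun s => f s * g s) t.
Proof. exact (continuous_mult f g t). Qed.

Lemma ex_derive_continuous_R (f : R -> R) t : ex_derive f t -> continuous f t.
Proof. exact (ex_derive_continuous (K := R_AbsRing) f t). Qed.

Lemma sinc_0 : sinc 0 = 1.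
Proof. unfold sinc; destruct (Req_EM_T 0 0); [reflexivity | congruence]. Qed.

Lemma sinc_neq0 y : y <> 0 -> sinc y = sin y / y.
Proof. intros Hy; unfold sinc; destruct (Req_EM_T y 0); [contradiction | reflexivity]. Qed.

Lemma continuous_sinc y : continuous sinc y.
Proof.
  destruct (Req_EM_T y 0) as [-> | Hy].
  - apply continuity_pt_filterlim, continuity_pt_locally; intros eps.
    destruct (derivable_pt_lim_sin 0 eps (cond_pos eps)) as [d Hd].
    exists d; intros u Hu; change (Rabs (u - 0) < d) in Hu.
    destruct (Req_EM_T u 0) as [-> | Hu0].
    + rewrite Rminus_diag, Rabs_R0; apply cond_pos.
    + rewrite sinc_neq0, sinc_0 by exact Hu0; rewrite Rminus_0_r in Hu.
      specialize (Hd u Hu0 Hu).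
      rewrite Rplus_0_l, sin_0, cos_0, Rminus_0_r in Hd; exact Hd.
  - assert (Hpos : 0 < Rabs y) by (apply Rabs_pos_lt; exact Hy).
    assert (Hc : continuous (fun z => sin z / z) y)
      by (apply ex_derive_continuous_R; auto_derive; exact Hy).
    refine (continuous_ext_loc _ _ _ _ Hc).
    exists (mkposreal _ Hpos); intros z Hz; change (Rabs (z - y) < Rabs y) in Hz.
    symmetry; apply sinc_neq0; intros ->.
    rewrite Rminus_0_l, Rabs_Ropp in Hz; lra.
Qed.

Definition sinc2 (y : R) : R := sinc y ^ 2.

Lemma sinc2_opp y : sinc2 (- y) = sinc2 y.
Proof.
  unfold sinc2; destruct (Req_EM_T y 0) as [-> | Hy].
  - now rewrite Ropp_0.
  - rewrite !sinc_neq0 by lra; rewrite sin_neg; field; exact Hy.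
Qed.

Lemma sinc2_ge0 y : 0 <= sinc2 y.
Proof. unfold sinc2; nra. Qed.

Lemma sinc2_mul_sqr y : sinc2 y * y ^ 2 = sin y ^ 2.
Proof.
  unfold sinc2; destruct (Req_EM_T y 0) as [-> | Hy].
  - rewrite sin_0; ring.
  - rewrite sinc_neq0 by exact Hy; field; exact Hy.
Qed.

Lemma sinc2_scaled_eq k s : s <> 0 -> k ^ 2 * sinc2 (k * s) = sin (k * s) ^ 2 / s ^ 2.
Proof. intros Hs; rewrite <- sinc2_mul_sqr; field; exact Hs. Qed.

Lemma sinc2_le_inv_sqr y : y <> 0 -> sinc2 y <= / y ^ 2.
Proof.
  intros Hy; assert (Hy2 : 0 < y ^ 2) by (apply pow2_gt_0; exact Hy).
  assert (Hsin := sinc2_mul_sqr y); assert (Hb := SIN_bound y).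
  apply (Rmult_le_reg_r (y ^ 2)); [exact Hy2|].
  rewrite Rinv_l by lra; nra.
Qed.

Lemma sin_ge_cubic a : 0 <= a -> a <= 4 -> a - a ^ 3 / 6 <= sin a.
Proof.
  intros H0 H4; destruct (pre_sin_bound a 0 H0 H4) as [H _].
  unfold sin_approx, sin_term in H; simpl in H; lra.
Qed.

Lemma sinc2_ge_quadratic u : u ^ 2 <= 6 -> (1 - u ^ 2 / 6) ^ 2 <= sinc2 u.
Proof.
  intros Hu; destruct (Req_EM_T u 0) as [-> | Hu0].
  - unfold sinc2; rewrite sinc_0; lra.
  - set (r := Rabs u).
    assert (Hr2 : r ^ 2 = u ^ 2) by apply pow2_abs.
    assert (Hr0 : 0 < r) by (apply Rabs_pos_lt; exact Hu0).
    assert (Hsr : sin r ^ 2 = sin u ^ 2).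
    { unfold r, Rabs; destruct (Rcase_abs u); [rewrite sin_neg; ring | reflexivity]. }
    assert (Hlow : r * (1 - u ^ 2 / 6) <= sin r).
    { rewrite <- Hr2; assert (H := sin_ge_cubic r (Rlt_le _ _ Hr0) ltac:(nra)); lra. }
    assert (Hsq : (r * (1 - u ^ 2 / 6)) ^ 2 <= sin r ^ 2)
      by (apply pow_incr; split; [apply Rmult_le_pos; lra | exact Hlow]).
    assert (Hmul := sinc2_mul_sqr u).
    apply (Rmult_le_reg_r (u ^ 2)); [apply pow2_gt_0; exact Hu0|].
    rewrite Hmul, <- Hsr.
    replace ((1 - u ^ 2 / 6) ^ 2 * u ^ 2) with ((r * (1 - u ^ 2 / 6)) ^ 2)
      by (rewrite <- Hr2; ring).
    exact Hsq.
Qed.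

Lemma continuous_sinc2_comp (phi : R -> R) t :
  ex_derive phi t -> continuous (fun s => sinc2 (phi s)) t.
Proof.
  intros Hphi; unfold sinc2; simpl.
  assert (Hc : continuous (fun s => sinc (phi s)) t)
    by (apply (continuous_comp phi sinc); [apply ex_derive_continuous_R, Hphi | apply continuous_sinc]).
  apply continuous_mult_R; [exact Hc|].
  apply continuous_mult_R; [exact Hc | apply continuous_const].
Qed.

Lemma continuous_sinc2 y : continuous sinc2 y.
Proof. apply (continuous_sinc2_comp (fun s => s)); auto_derive; exact I. Qed.

Lemma continuous_sinc2_scaled a k y : continuous (fun u => a * sinc2 (k * u)) y.
Proof.
  apply continuous_scal_R.
  apply (continuous_sinc2_comp (fun u => k * u)); auto_derive; exact I.
Qed.

Lemma is_lim_scal_l_R (f : R -> R) a (l : R) :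
  is_lim f p_infty l -> is_lim (fun y => a * f y) p_infty (a * l).
Proof. exact (is_lim_scal_l f a p_infty l). Qed.

Section Integrals.

Variable f : R -> R.
Hypothesis f_cont : forall t, continuous f t.

Lemma ex_RInt_cont a b : ex_RInt f a b.
Proof. apply (ex_RInt_continuous (V := R_CompleteNormedModule)); intros; apply f_cont. Qed.

Lemma RInt_from_0 a b : RInt f a b = RInt f 0 b - RInt f 0 a.
Proof.
  assert (H := RInt_Chasles f 0 a b (ex_RInt_cont _ _) (ex_RInt_cont _ _)).
  change (RInt f 0 a + RInt f a b = RInt f 0 b) in H; lra.
Qed.

Lemma continuous_shift q t : continuous (fun s => f (s + q)) t.
Proof.
  apply (continuous_comp (fun s => s + q) f); [|apply f_cont].
  apply ex_derive_continuous_R; auto_derive; exact I.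
Qed.

Lemma RInt_shift q a b : RInt (fun t => f (t + q)) a b = RInt f (a + q) (b + q).
Proof.
  assert (H := RInt_comp_lin f 1 q a b (ex_RInt_cont _ _)).
  rewrite !Rmult_1_l in H; rewrite <- H.
  apply RInt_ext; intros t _; change (f (t + q) = 1 * f (1 * t + q)); now rewrite !Rmult_1_l.
Qed.

Lemma RInt_0_opp y : RInt f 0 (- y) = - RInt (fun s => f (- s)) 0 y.
Proof.
  assert (H := RInt_comp_lin f (-1) 0 0 y (ex_RInt_cont _ _)).
  replace (-1 * 0 + 0) with 0 in H by ring; replace (-1 * y + 0) with (- y) in H by ring.
  rewrite <- H.
  replace (- RInt (fun s => f (- s)) 0 y) with (scal (-1) (RInt (fun s => f (- s)) 0 y))
    by (unfold scal; simpl; unfold mult; simpl; ring).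
  rewrite <- RInt_scal.
  - apply RInt_ext; intros t _; now replace (-1 * t + 0) with (- t) by ring.
  - apply (ex_RInt_continuous (V := R_CompleteNormedModule)); intros t _.
    apply (continuous_comp (fun s => - s) f); [|apply f_cont].
    apply ex_derive_continuous_R; auto_derive; exact I.
Qed.

End Integrals.

Lemma RInt_plus_cont (f g : R -> R) a b : (forall t, continuous f t) -> (forall t, continuous g t) ->
  RInt (fun s => f s + g s) a b = RInt f a b + RInt g a b.
Proof. intros Hf Hg; exact (RInt_plus f g a b (ex_RInt_cont f Hf a b) (ex_RInt_cont g Hg a b)). Qed.

Lemma RInt_scal_cont (f : R -> R) k a b : (forall t, continuous f t) ->
  RInt (fun s => k * f s) a b = k * RInt f a b.
Proof. intros Hf; exact (RInt_scal f a b k (ex_RInt_cont f Hf a b)). Qed.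

Lemma RInt_minus_cont (f g : R -> R) a b : (forall t, continuous f t) -> (forall t, continuous g t) ->
  RInt (fun s => f s - g s) a b = RInt f a b - RInt g a b.
Proof. intros Hf Hg; exact (RInt_minus f g a b (ex_RInt_cont f Hf a b) (ex_RInt_cont g Hg a b)). Qed.

Lemma RInt_opp_cont (f : R -> R) a b : (forall t, continuous f t) ->
  RInt (fun s => - f s) a b = - RInt f a b.
Proof. intros Hf; exact (RInt_opp f a b (ex_RInt_cont f Hf a b)). Qed.

Section Improper.

Variable f : R -> R.
Hypothesis f_cont : forall t, continuous f t.

Lemma RInt_shift_pair_even p b : (forall s, f (- s) = f s) ->
  RInt (fun t => f (t - p) + f (t + p)) 0 b = RInt f 0 (b - p) + RInt f 0 (b + p).
Proof.
  intros Heven; unfold Rminus.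
  rewrite RInt_plus_cont, !RInt_shift by (exact f_cont || apply continuous_shift; exact f_cont).
  rewrite (RInt_from_0 f f_cont (0 + - p)), (RInt_from_0 f f_cont (0 + p)), Rplus_0_l.
  rewrite RInt_0_opp by exact f_cont.
  rewrite (RInt_ext (fun s => f (- s)) f) by (intros; apply Heven).
  rewrite Rplus_0_l; lra.
Qed.

Lemma RInt_shift_pair_odd p b : (forall s, f (- s) = - f s) ->
  RInt (fun t => f (t + p) - f (t - p)) 0 b = RInt f (b - p) (b + p).
Proof.
  intros Hodd.
  rewrite RInt_minus_cont by (intros; apply continuous_shift; exact f_cont).
  unfold Rminus; rewrite !RInt_shift by exact f_cont.
  rewrite (RInt_from_0 f f_cont (0 + - p)), (RInt_from_0 f f_cont (0 + p)),
    (RInt_from_0 f f_cont (b + - p)), !Rplus_0_l.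
  rewrite RInt_0_opp by exact f_cont.
  rewrite (RInt_ext (fun s => f (- s)) (fun s => - f s)) by (intros; apply Hodd).
  rewrite RInt_opp_cont by exact f_cont.
  lra.
Qed.

Lemma is_lim_RInt_shift q l : is_lim (fun b => RInt f 0 b) p_infty l ->
  is_lim (fun b => RInt f 0 (b + q)) p_infty l.
Proof.
  intros Hl; apply (is_lim_comp (fun b => RInt f 0 b) (fun b => b + q) p_infty l p_infty Hl).
  - apply is_lim_spec; intros M; exists (M - q); intros x Hx; simpl; lra.
  - exists 0; intros; discriminate.
Qed.

Lemma is_lim_RInt_window p M : 0 <= p -> (forall s, 0 < s -> Rabs (f s) <= M / s ^ 2) ->
  is_lim (fun b => RInt f (b - p) (b + p)) p_infty 0.
Proof.
  intros Hp Hf.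
  assert (HM : 0 <= M) by (specialize (Hf 1 Rlt_0_1); rewrite pow1 in Hf;
                           assert (H := Rabs_pos (f 1)); lra).
  apply is_lim_spec; intros eps; simpl; assert (He := cond_pos eps).
  exists (p + 1 + 2 * p * M / eps); intros b Hb.
  assert (Hq : 0 <= 2 * p * M / eps) by (apply Rdiv_le_0_compat; [nra | lra]).
  set (d := b - p).
  assert (Hd1 : 1 <= d) by (unfold d; lra).
  assert (Hd : 2 * p * M < eps * d).
  { assert (E : 2 * p * M = 2 * p * M / eps * eps) by (field; lra).
    assert (H : 0 < eps * (d - 1 - 2 * p * M / eps)) by (apply Rmult_lt_0_compat; unfold d; lra).
    nra. }
  rewrite Rminus_0_r.
  apply Rle_lt_trans with ((b + p - (b - p)) * (M / d ^ 2)).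
  - apply abs_RInt_le_const; [lra | apply ex_RInt_cont; exact f_cont |].
    intros t Ht; apply Rle_trans with (M / t ^ 2); [apply Hf; unfold d in *; lra|].
    apply Rmult_le_compat_l; [exact HM|].
    apply Rinv_le_contravar; [apply pow_lt; lra | apply pow_incr; unfold d in *; lra].
  - replace ((b + p - (b - p)) * (M / d ^ 2)) with (2 * p * M / d * / d) by (field; lra).
    assert (E : 2 * p * M / d * d = 2 * p * M) by (field; lra).
    assert (Hinv : 0 < / d <= 1)
      by (split; [apply Rinv_0_lt_compat; lra | rewrite <- Rinv_1; apply Rinv_le_contravar; lra]).
    assert (HX0 : 0 <= 2 * p * M / d) by (apply Rdiv_le_0_compat; nra).
    assert (HX : 2 * p * M / d < eps) by (apply (Rmult_lt_reg_r d); [lra | rewrite E; lra]).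
    nra.
Qed.

Lemma is_RInt_gen_of_is_lim (l : R) : is_lim (fun b => RInt f 0 b) p_infty l ->
  is_RInt_gen f (at_point 0) (Rbar_locally p_infty) l.
Proof.
  intros Hl P HP.
  apply (Filter_prod _ _ _ (fun a => a = 0) (fun b => P (RInt f 0 b))).
  - reflexivity.
  - exact (Hl _ HP).
  - intros a b -> Hb; exists (RInt f 0 b); split; [|exact Hb].
    apply (RInt_correct (V := R_CompleteNormedModule)), ex_RInt_cont; exact f_cont.
Qed.

End Improper.

Fixpoint dirichlet (m : nat) (u : R) : R :=
  match m with
  | O => 1
  | S m' => dirichlet m' u + 2 * cos (2 * INR (S m') * u)
  end.

Fixpoint fejer (n : nat) (u : R) : R :=
  match n with
  | O => 0
  | S n' => fejer n' u + dirichlet n' u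
  end.

Lemma dirichlet_mul_sin m u : dirichlet m u * sin u = sin ((2 * INR m + 1) * u).
Proof.
  induction m as [|m IH]; cbn [dirichlet].
  - replace ((2 * INR 0 + 1) * u) with u by (simpl; ring); ring.
  - rewrite Rmult_plus_distr_r, IH.
    set (A := 2 * INR (S m) * u).
    replace ((2 * INR (S m) + 1) * u) with (A + u) by (unfold A; ring).
    replace ((2 * INR m + 1) * u) with (A - u) by (unfold A; rewrite S_INR; ring).
    rewrite sin_plus, sin_minus; ring.
Qed.

Lemma fejer_mul_sin2 n u : fejer n u * sin u ^ 2 = sin (INR n * u) ^ 2.
Proof.
  induction n as [|n IH]; cbn [fejer].
  - simpl INR; rewrite !Rmult_0_l, sin_0; ring.
  - replace ((fejer n u + dirichlet n u) * sin u ^ 2)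
      with (fejer n u * sin u ^ 2 + dirichlet n u * sin u * sin u) by ring.
    rewrite IH, dirichlet_mul_sin.
    set (A := INR n * u).
    replace (INR (S n) * u) with (A + u) by (unfold A; rewrite S_INR; ring).
    replace ((2 * INR n + 1) * u) with (2 * A + u) by (unfold A; ring).
    rewrite !sin_plus, sin_2a, cos_2a.
    assert (Hu := sin2_cos2 u); assert (HA := sin2_cos2 A); unfold Rsqr in Hu, HA.
    nra.
Qed.

Lemma sin_INR_mult_PI n : sin (INR n * PI) = 0.
Proof. apply sin_eq_0_1; exists (Z.of_nat n); now rewrite <- INR_IZR_INZ. Qed.

Lemma is_RInt_dirichlet m : is_RInt (dirichlet m) 0 (PI / 2) (PI / 2).
Proof.
  induction m as [|m IH]; cbn [dirichlet].
  - rewrite <- (Rmult_1_r (PI / 2)) at 2; rewrite <- (Rminus_0_r (PI / 2)) at 2.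
    apply (is_RInt_const (V := R_NormedModule)).
  - set (k := INR (S m)).
    assert (Hk : 0 < k) by (apply lt_0_INR; lia).
    assert (Hcos : is_RInt (fun u => 2 * cos (2 * k * u)) 0 (PI / 2) 0).
    { assert (H : is_RInt (fun u => 2 * cos (2 * k * u)) 0 (PI / 2)
                   (minus (sin (2 * k * (PI / 2)) / k) (sin (2 * k * 0) / k))).
      { apply (is_RInt_derive (V := R_CompleteNormedModule) (fun u => sin (2 * k * u) / k)).
        - intros u _; auto_derive; [lra | field; lra].
        - intros u _; apply ex_derive_continuous_R; auto_derive; exact I. }
      replace (2 * k * (PI / 2)) with (INR (S m) * PI) in H by (unfold k; field).
      rewrite sin_INR_mult_PI, Rmult_0_r, sin_0 in H.
      replace (minus (0 / k) (0 / k)) with 0 in H by (unfold minus, plus, opp; simpl; field; lra).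
      exact H. }
    rewrite <- (Rplus_0_r (PI / 2)) at 2.
    exact (is_RInt_plus _ _ _ _ _ _ IH Hcos).
Qed.

Lemma is_RInt_fejer n : is_RInt (fejer n) 0 (PI / 2) (INR n * (PI / 2)).
Proof.
  induction n as [|n IH]; cbn [fejer].
  - replace (INR 0 * (PI / 2)) with ((PI / 2 - 0) * 0) by (simpl; ring).
    apply (is_RInt_const (V := R_NormedModule)).
  - replace (INR (S n) * (PI / 2)) with (INR n * (PI / 2) + PI / 2) by (rewrite S_INR; ring).
    exact (is_RInt_plus _ _ _ _ _ _ IH (is_RInt_dirichlet n)).
Qed.

Lemma inv_sin2_sub_inv_sqr u : 0 < u < PI / 2 -> 0 <= / sin u ^ 2 - / u ^ 2 <= 3.
Proof.
  intros Hu; assert (Hpi := PI_4).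
  assert (Hs0 : 0 < sin u) by (apply sin_gt_0; lra).
  assert (Hsu : sin u < u) by (apply sin_lt_x; lra).
  assert (Hcub : u - u ^ 3 / 6 <= sin u) by (apply sin_ge_cubic; lra).
  set (s := sin u) in *.
  assert (Hs3 : u / 3 <= s) by nra.
  replace (/ s ^ 2 - / u ^ 2) with ((u - s) * (u + s) / (u ^ 2 * s ^ 2)) by (field; lra).
  split.
  - apply Rdiv_le_0_compat; [nra | apply Rmult_lt_0_compat; apply pow_lt; lra].
  - apply Rle_div_l; [apply Rmult_lt_0_compat; apply pow_lt; lra|].
    assert (H1 : (u - s) * (u + s) <= u ^ 3 / 6 * (2 * u)) by (apply Rmult_le_compat; nra).
    assert (H2 : u / 3 * (u / 3) <= s * s) by (apply Rmult_le_compat; lra).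
    nra.
Qed.

Lemma fejer_sub_sinc2 n u : 0 < u < PI / 2 ->
  0 <= fejer n u - INR n ^ 2 * sinc2 (INR n * u) <= 3.
Proof.
  intros Hu; assert (Hpi := PI_4).
  assert (Hs : 0 < sin u) by (apply sin_gt_0; lra).
  assert (Hfej : fejer n u = sin (INR n * u) ^ 2 / sin u ^ 2).
  { rewrite <- fejer_mul_sin2; field; lra. }
  rewrite Hfej, sinc2_scaled_eq by lra.
  replace (sin (INR n * u) ^ 2 / sin u ^ 2 - sin (INR n * u) ^ 2 / u ^ 2)
    with (sin (INR n * u) ^ 2 * (/ sin u ^ 2 - / u ^ 2)) by (field; lra).
  assert (Hb := SIN_bound (INR n * u)); assert (Hd := inv_sin2_sub_inv_sqr u Hu).
  split; nra.
Qed.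

Lemma RInt_sinc2_scale k b : RInt (fun u => k ^ 2 * sinc2 (k * u)) 0 b = k * RInt sinc2 0 (k * b).
Proof.
  assert (H := RInt_comp_lin sinc2 k 0 0 b (ex_RInt_cont sinc2 continuous_sinc2 _ _)).
  rewrite Rmult_0_r, Rplus_0_l, Rplus_0_r in H.
  rewrite <- H, (RInt_ext (fun y => scal k (sinc2 (k * y + 0))) (fun u => k * sinc2 (k * u)))
    by (intros t _; now rewrite Rplus_0_r).
  rewrite <- RInt_scal_cont by apply continuous_sinc2_scaled.
  apply RInt_ext; intros t _; simpl; ring.
Qed.

(* Integrating [fejer_sub_sinc2] over (0, PI/2), where the Fejer kernel has integral n PI/2. *)
Lemma RInt_sinc2_multiple n :
  INR n * (PI / 2) - 3 * (PI / 2) <= INR n * RInt sinc2 0 (INR n * (PI / 2)) <= INR n * (PI / 2).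
Proof.
  assert (Hpi := PI_RGT_0).
  rewrite <- RInt_sinc2_scale.
  assert (Hfej := is_RInt_fejer n).
  assert (Hlow : is_RInt (fun u => fejer n u - 3) 0 (PI / 2) (INR n * (PI / 2) - 3 * (PI / 2))).
  { replace (INR n * (PI / 2) - 3 * (PI / 2)) with (minus (INR n * (PI / 2)) (scal (PI / 2 - 0) 3))
      by (unfold minus, plus, opp, scal; simpl; unfold mult; simpl; ring).
    apply (is_RInt_minus (V := R_NormedModule)); [exact Hfej | apply (is_RInt_const (V := R_NormedModule))]. }
  assert (Hsinc : ex_RInt (fun u => INR n ^ 2 * sinc2 (INR n * u)) 0 (PI / 2)).
  { apply ex_RInt_cont, continuous_sinc2_scaled. }
  split.
  - rewrite <- (is_RInt_unique _ _ _ _ Hlow).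
    apply RInt_le; [lra | eexists; exact Hlow | exact Hsinc |].
    intros u Hu; assert (H := fejer_sub_sinc2 n u Hu); lra.
  - rewrite <- (is_RInt_unique _ _ _ _ Hfej).
    apply RInt_le; [lra | exact Hsinc | eexists; exact Hfej |].
    intros u Hu; assert (H := fejer_sub_sinc2 n u Hu); lra.
Qed.

Lemma RInt_sinc2_monotone a b : 0 <= a <= b -> RInt sinc2 0 a <= RInt sinc2 0 b.
Proof.
  intros Hab.
  assert (H : 0 <= RInt sinc2 a b)
    by (apply RInt_ge_0; [lra | apply ex_RInt_cont, continuous_sinc2 | intros; apply sinc2_ge0]).
  rewrite (RInt_from_0 sinc2 continuous_sinc2 a b) in H; lra.
Qed.

Lemma RInt_sinc2_le_PI2 y : 0 <= y -> RInt sinc2 0 y <= PI / 2.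
Proof.
  intros Hy; assert (Hpi := PI_RGT_0).
  destruct (INR_unbounded (y / (PI / 2))) as [n Hn].
  assert (Hn0 : 0 < INR n) by (apply Rle_lt_trans with (y / (PI / 2)); [apply Rdiv_le_0_compat|]; lra).
  assert (Hyn : y <= INR n * (PI / 2)).
  { apply (Rmult_lt_compat_r (PI / 2)) in Hn; [|lra].
    unfold Rdiv in Hn; rewrite Rmult_assoc, Rinv_l, Rmult_1_r in Hn; lra. }
  apply Rle_trans with (RInt sinc2 0 (INR n * (PI / 2))); [apply RInt_sinc2_monotone; lra|].
  destruct (RInt_sinc2_multiple n) as [_ H].
  apply (Rmult_le_reg_l (INR n)); lra.
Qed.

Lemma is_lim_RInt_sinc2 : is_lim (fun b => RInt sinc2 0 b) p_infty (PI / 2).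
Proof.
  apply is_lim_spec; intros eps; simpl; assert (He := cond_pos eps); assert (Hpi := PI_RGT_0).
  destruct (INR_unbounded (3 * (PI / 2) / eps)) as [n Hn].
  assert (Hq : 0 < 3 * (PI / 2) / eps) by (apply Rdiv_lt_0_compat; lra).
  assert (Hneps : 3 * (PI / 2) < eps * INR n).
  { apply (Rmult_lt_compat_l eps) in Hn; [|exact He].
    unfold Rdiv in Hn; rewrite (Rmult_comm (3 * (PI / 2))), <- Rmult_assoc, Rinv_r, Rmult_1_l in Hn; lra. }
  exists (INR n * (PI / 2)); intros y Hy.
  destruct (RInt_sinc2_multiple n) as [H _].
  assert (Hlow : PI / 2 - eps < RInt sinc2 0 (INR n * (PI / 2))).
  { apply (Rmult_lt_reg_l (INR n)); [lra | nra]. }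
  assert (Hmono := RInt_sinc2_monotone (INR n * (PI / 2)) y ltac:(nra)).
  assert (Hup := RInt_sinc2_le_PI2 y ltac:(nra)).
  apply Rabs_lt_between'; lra.
Qed.

Lemma is_lim_RInt_sinc2_scaled k :
  is_lim (fun b => RInt (fun s => k ^ 2 * sinc2 (k * s)) 0 b) p_infty (Rabs k * (PI / 2)).
Proof.
  apply (is_lim_ext (fun b => Rabs k * RInt sinc2 0 (Rabs k * b))).
  { intros b; rewrite <- RInt_sinc2_scale; apply RInt_ext; intros s _.
    rewrite pow2_abs; unfold Rabs; destruct (Rcase_abs k); [|reflexivity].
    now rewrite Ropp_mult_distr_l_reverse, sinc2_opp. }
  destruct (Req_dec k 0) as [-> | Hk].
  - rewrite Rabs_R0, Rmult_0_l.
    apply (is_lim_ext (fun _ => 0)); [intros; ring | apply is_lim_const].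
  - assert (Hk0 : 0 < Rabs k) by (apply Rabs_pos_lt; exact Hk).
    apply is_lim_scal_l_R.
    apply (is_lim_comp (fun b => RInt sinc2 0 b) (fun b => Rabs k * b) p_infty (PI / 2) p_infty).
    + exact is_lim_RInt_sinc2.
    + apply is_lim_spec; intros M; exists (M / Rabs k); intros y Hy; simpl.
      apply (Rmult_lt_compat_l (Rabs k)) in Hy; [|exact Hk0].
      replace (Rabs k * (M / Rabs k)) with M in Hy by (field; lra); exact Hy.
    + exists 0; intros; discriminate.
Qed.

Lemma sin2_mul_cos_double A B :
  2 * sin A ^ 2 * cos (2 * B) = sin (A + B) ^ 2 + sin (A - B) ^ 2 - 2 * sin B ^ 2.
Proof.
  rewrite cos_2a, sin_plus, sin_minus.
  replace ((sin A * cos B + cos A * sin B) ^ 2 + (sin A * cos B - cos A * sin B) ^ 2)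
    with (2 * sin A ^ 2 * cos B ^ 2 + 2 * (cos A * cos A) * sin B ^ 2) by ring.
  assert (HA := sin2_cos2 A); unfold Rsqr in HA.
  replace (cos A * cos A) with (1 - sin A * sin A) by lra.
  ring.
Qed.

Lemma sinc2_mul_cos c x s : c <> 0 ->
  sinc2 (c * s) * cos (s * x) =
  / (2 * c ^ 2) * ((c + x / 2) ^ 2 * sinc2 ((c + x / 2) * s) + (c - x / 2) ^ 2 * sinc2 ((c - x / 2) * s))
  - / c ^ 2 * ((x / 2) ^ 2 * sinc2 (x / 2 * s)).
Proof.
  intros Hc; destruct (Req_dec s 0) as [-> | Hs].
  - rewrite !Rmult_0_r, Rmult_0_l, cos_0; unfold sinc2; rewrite sinc_0; field; exact Hc.
  - replace (sinc2 (c * s)) with (c ^ 2 * sinc2 (c * s) / c ^ 2) by (field; exact Hc).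
    rewrite !sinc2_scaled_eq by exact Hs.
    replace ((c + x / 2) * s) with (c * s + x / 2 * s) by ring.
    replace ((c - x / 2) * s) with (c * s - x / 2 * s) by ring.
    assert (T := sin2_mul_cos_double (c * s) (x / 2 * s)).
    replace (2 * (x / 2 * s)) with (s * x) in T by field.
    replace (sin (c * s + x / 2 * s) ^ 2)
      with (2 * sin (c * s) ^ 2 * cos (s * x) - sin (c * s - x / 2 * s) ^ 2 + 2 * sin (x / 2 * s) ^ 2) by lra.
    field; split; assumption.
Qed.

(* For c > 0 this is the triangle function PI / (2 c^2) * max 0 (c - |x| / 2). *)
Definition sinc2_cos_transform (c x : R) : R :=
  PI / (4 * c ^ 2) * (Rabs (c + x / 2) + Rabs (c - x / 2) - Rabs x).

Lemma is_lim_RInt_sinc2_cos c x : c <> 0 ->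
  is_lim (fun b => RInt (fun s => sinc2 (c * s) * cos (s * x)) 0 b) p_infty (sinc2_cos_transform c x).
Proof.
  intros Hc.
  set (F k := fun s => k ^ 2 * sinc2 (k * s)).
  apply (is_lim_ext (fun b => / (2 * c ^ 2) * (RInt (F (c + x / 2)) 0 b + RInt (F (c - x / 2)) 0 b)
                              - / c ^ 2 * RInt (F (x / 2)) 0 b)).
  { intros b.
    assert (HF : forall k t, continuous (F k) t) by (intros; apply continuous_sinc2_scaled).
    rewrite (RInt_ext _ _ _ _ (fun s _ => sinc2_mul_cos c x s Hc)).
    assert (HF12 : forall t, continuous (fun s => F (c + x / 2) s + F (c - x / 2) s) t)
      by (intros t; apply continuous_plus_R; apply HF).
    rewrite RInt_minus_cont, (RInt_scal_cont _ (/ (2 * c ^ 2))), (RInt_scal_cont _ (/ c ^ 2)), RInt_plus_cont.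
    - reflexivity.
    - apply HF.
    - apply HF.
    - apply HF.
    - exact HF12.
    - intros t; apply continuous_scal_R, HF12.
    - intros t; apply continuous_scal_R, HF. }
  replace (sinc2_cos_transform c x)
    with (/ (2 * c ^ 2) * (Rabs (c + x / 2) * (PI / 2) + Rabs (c - x / 2) * (PI / 2))
          - / c ^ 2 * (Rabs (x / 2) * (PI / 2))).
  - apply is_lim_minus'; apply is_lim_scal_l_R; [apply is_lim_plus'|]; apply is_lim_RInt_sinc2_scaled.
  - unfold sinc2_cos_transform, Rdiv; rewrite Rabs_mult, (Rabs_right (/ 2)) by lra; field; exact Hc.
Qed.

Lemma sinc2_cos_transform_out c x : 0 < c -> 2 * c <= x -> sinc2_cos_transform c x = 0.
Proof.
  intros Hc Hx; unfold sinc2_cos_transform.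
  rewrite (Rabs_right (c + x / 2)), (Rabs_left1 (c - x / 2)), (Rabs_right x) by lra.
  field; lra.
Qed.

Lemma sinc2_cos_transform_0 c : 0 < c -> sinc2_cos_transform c 0 = PI / (2 * c).
Proof.
  intros Hc; unfold sinc2_cos_transform.
  replace (0 / 2) with 0 by field; rewrite Rplus_0_r, Rminus_0_r, Rabs_R0, Rabs_right by lra.
  field; lra.
Qed.

Section Cosine_integral_of_H.

Variables alpha x : R.
Hypothesis alpha_pos : 0 < alpha.

Let c := alpha / 2.
Let p := PI / alpha.
Let e s := sinc2 (c * s) * cos (s * x).
Let o s := sinc2 (c * s) * sin (s * x).

Let p_pos : 0 < p.
Proof. unfold p; apply Rdiv_lt_0_compat; [exact PI_RGT_0 | exact alpha_pos]. Qed.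

Let e_cont t : continuous e t.
Proof.
  apply continuous_mult_R; [apply continuous_sinc2_comp | apply ex_derive_continuous_R];
    auto_derive; exact I.
Qed.

Let o_cont t : continuous o t.
Proof.
  apply continuous_mult_R; [apply continuous_sinc2_comp | apply ex_derive_continuous_R];
    auto_derive; exact I.
Qed.

Let e_even s : e (- s) = e s.
Proof.
  unfold e; rewrite Ropp_mult_distr_r_reverse, sinc2_opp, Ropp_mult_distr_l_reverse, cos_neg.
  reflexivity.
Qed.

Let o_odd s : o (- s) = - o s.
Proof.
  unfold o; rewrite Ropp_mult_distr_r_reverse, sinc2_opp, Ropp_mult_distr_l_reverse, sin_neg.
  ring.
Qed.

Lemma H_alpha_mul_cos t :
  H_alpha alpha t * cos (t * x) =
  alpha / 2 * e t
  + alpha / 4 * (cos (p * x) * (e (t - p) + e (t + p)) + sin (p * x) * (o (t + p) - o (t - p))).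
Proof.
  assert (Hm : cos (t * x) = cos ((t - p) * x) * cos (p * x) - sin ((t - p) * x) * sin (p * x))
    by (rewrite <- cos_plus; f_equal; ring).
  assert (Hp : cos (t * x) = cos ((t + p) * x) * cos (p * x) + sin ((t + p) * x) * sin (p * x))
    by (rewrite <- cos_minus; f_equal; ring).
  unfold H_alpha, e, o.
  replace (alpha * t / 2) with (c * t) by (unfold c; field).
  replace ((alpha * t - PI) / 2) with (c * (t - p)) by (unfold c, p; field; lra).
  replace ((alpha * t + PI) / 2) with (c * (t + p)) by (unfold c, p; field; lra).
  transitivity (alpha / 2 * (sinc2 (c * t) * cos (t * x))
    + alpha / 4 * (sinc2 (c * (t - p)) * cos (t * x) + sinc2 (c * (t + p)) * cos (t * x)));
    [unfold sinc2; ring|].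
  rewrite Hm at 2; rewrite Hp at 2; ring.
Qed.

Let shifted_e_cont t : continuous (fun s => e (s - p) + e (s + p)) t.
Proof.
  apply continuous_plus_R; apply continuous_shift, e_cont.
Qed.

Let shifted_o_cont t : continuous (fun s => o (s + p) - o (s - p)) t.
Proof.
  apply continuous_minus_R; apply continuous_shift, o_cont.
Qed.

Lemma RInt_H_alpha_mul_cos b :
  RInt (fun t => H_alpha alpha t * cos (t * x)) 0 b =
  alpha / 2 * RInt e 0 b
  + alpha / 4 * (cos (p * x) * (RInt e 0 (b - p) + RInt e 0 (b + p)) + sin (p * x) * RInt o (b - p) (b + p)).
Proof.
  rewrite (RInt_ext _ _ _ _ (fun t _ => H_alpha_mul_cos t)).
  rewrite <- (RInt_shift_pair_even e e_cont p b e_even), <- (RInt_shift_pair_odd o o_cont p b o_odd).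
  assert (Hcos : forall t, continuous (fun s => cos (p * x) * (e (s - p) + e (s + p))) t)
    by (intros t; apply continuous_scal_R, shifted_e_cont).
  assert (Hsin : forall t, continuous (fun s => sin (p * x) * (o (s + p) - o (s - p))) t)
    by (intros t; apply continuous_scal_R, shifted_o_cont).
  assert (Hsum : forall t, continuous (fun s => cos (p * x) * (e (s - p) + e (s + p))
                                                + sin (p * x) * (o (s + p) - o (s - p))) t)
    by (intros t; apply continuous_plus_R; [apply Hcos | apply Hsin]).
  rewrite RInt_plus_cont, !RInt_scal_cont, RInt_plus_cont, !RInt_scal_cont.
  - reflexivity.
  - exact shifted_o_cont.
  - exact shifted_e_cont.
  - exact Hcos.
  - exact Hsin.
  - exact Hsum.
  - exact e_cont.
  - intros t; apply continuous_scal_R, e_cont.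
  - intros t; apply continuous_scal_R, Hsum.
Qed.

Lemma is_lim_RInt_H_alpha_mul_cos :
  is_lim (fun b => RInt (fun t => H_alpha alpha t * cos (t * x)) 0 b) p_infty
    (alpha / 2 * (1 + cos (PI / alpha * x)) * sinc2_cos_transform (alpha / 2) x).
Proof.
  assert (Hc : 0 < c) by (unfold c; lra).
  assert (He : is_lim (fun b => RInt e 0 b) p_infty (sinc2_cos_transform c x))
    by (apply is_lim_RInt_sinc2_cos; lra).
  assert (Ho : forall s, 0 < s -> Rabs (o s) <= / c ^ 2 / s ^ 2).
  { intros s Hs; unfold o; rewrite Rabs_mult, (Rabs_right (sinc2 _)) by (apply Rle_ge, sinc2_ge0).
    assert (Hsin : Rabs (sin (s * x)) <= 1) by (apply Rabs_le, SIN_bound).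
    assert (Hb := sinc2_le_inv_sqr (c * s) ltac:(nra)); assert (H0 := sinc2_ge0 (c * s)).
    replace (/ c ^ 2 / s ^ 2) with (/ (c * s) ^ 2) by (field; lra).
    nra. }
  eapply is_lim_ext; [intros b; symmetry; apply RInt_H_alpha_mul_cos|].
  replace (alpha / 2 * (1 + cos (PI / alpha * x)) * sinc2_cos_transform (alpha / 2) x)
    with (alpha / 2 * sinc2_cos_transform c x
          + alpha / 4 * (cos (p * x) * (sinc2_cos_transform c x + sinc2_cos_transform c x)
                         + sin (p * x) * 0)) by (unfold c, p; field; lra).
  apply is_lim_plus'; apply is_lim_scal_l_R; [exact He|].
  apply is_lim_plus'; apply is_lim_scal_l_R; [apply is_lim_plus'|].
  - exact (is_lim_RInt_shift e (- p) _ He).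
  - exact (is_lim_RInt_shift e p _ He).
  - exact (is_lim_RInt_window o o_cont p (/ c ^ 2) (Rlt_le _ _ p_pos) Ho).
Qed.

End Cosine_integral_of_H.

Lemma continuous_H_alpha_mul_cos alpha x t : continuous (fun t => H_alpha alpha t * cos (t * x)) t.
Proof.
  unfold H_alpha; apply continuous_mult_R.
  - apply continuous_plus_R; apply continuous_scal_R; [|apply continuous_plus_R];
      apply continuous_sinc2_comp; auto_derive; exact I.
  - apply ex_derive_continuous_R; auto_derive; exact I.
Qed.

Lemma is_RInt_gen_H_alpha_mul_cos alpha x : 0 < alpha ->
  is_RInt_gen (fun t => H_alpha alpha t * cos (t * x)) (at_point 0) (Rbar_locally p_infty)
    (alpha / 2 * (1 + cos (PI / alpha * x)) * sinc2_cos_transform (alpha / 2) x).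
Proof.
  intros Ha; apply is_RInt_gen_of_is_lim.
  - apply continuous_H_alpha_mul_cos.
  - apply is_lim_RInt_H_alpha_mul_cos; exact Ha.
Qed.

Lemma G_alpha_eq alpha x : 0 < alpha ->
  G_alpha alpha x = alpha / (2 * PI) * (1 + cos (PI / alpha * x)) * sinc2_cos_transform (alpha / 2) x.
Proof.
  intros Ha; assert (Hpi := PI_RGT_0); unfold G_alpha.
  rewrite (is_RInt_gen_unique _ _ (is_RInt_gen_H_alpha_mul_cos alpha x Ha)).
  field; lra.
Qed.

Lemma H_alpha_scale alpha t : H_alpha alpha t = alpha / 2 * H_alpha 2 (alpha * t / 2).
Proof.
  unfold H_alpha.
  replace (2 * (alpha * t / 2) / 2) with (alpha * t / 2) by field.
  replace ((2 * (alpha * t / 2) - PI) / 2) with ((alpha * t - PI) / 2) by field.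
  replace ((2 * (alpha * t / 2) + PI) / 2) with ((alpha * t + PI) / 2) by field.
  field.
Qed.

Lemma H_alpha_2 u : H_alpha 2 u = sinc2 u + / 2 * (sinc2 (u - PI / 2) + sinc2 (u + PI / 2)).
Proof.
  unfold H_alpha, sinc2.
  replace (2 * u / 2) with u by field.
  replace ((2 * u - PI) / 2) with (u - PI / 2) by field.
  replace ((2 * u + PI) / 2) with (u + PI / 2) by field.
  field.
Qed.

Definition H2_closed_form (v A s : R) : R := s + (1 - v * s) * (v + A) / (A - v) ^ 2.

Lemma H_alpha_2_eq u : u ^ 2 <> (PI / 2) ^ 2 ->
  H_alpha 2 u = H2_closed_form (u ^ 2) ((PI / 2) ^ 2) (sinc2 u).
Proof.
  intros Hu; set (a := PI / 2) in *.
  assert (Hm : u - a <> 0) by (intros H; apply Hu; replace u with a by lra; reflexivity).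
  assert (Hp : u + a <> 0) by (intros H; apply Hu; replace u with (- a) by lra; ring).
  assert (Hcos : cos u ^ 2 = 1 - u ^ 2 * sinc2 u).
  { rewrite Rmult_comm, sinc2_mul_sqr; assert (H := sin2_cos2 u); unfold Rsqr in H; nra. }
  assert (Em : sinc2 (u - a) = cos u ^ 2 / (u - a) ^ 2).
  { replace (cos u ^ 2) with (sin (u - a) ^ 2) by (unfold a; rewrite sin_minus, sin_PI2, cos_PI2; ring).
    rewrite <- sinc2_mul_sqr; field; exact Hm. }
  assert (Ep : sinc2 (u + a) = cos u ^ 2 / (u + a) ^ 2).
  { replace (cos u ^ 2) with (sin (u + a) ^ 2) by (unfold a; rewrite sin_plus, sin_PI2, cos_PI2; ring).
    rewrite <- sinc2_mul_sqr; field; exact Hp. }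
  rewrite H_alpha_2; fold a; rewrite Em, Ep, Hcos; unfold H2_closed_form.
  replace (a ^ 2 - u ^ 2) with (- ((u - a) * (u + a))) by ring.
  field; split; assumption.
Qed.

Lemma H2_closed_form_ge_inv v A s : 0 < A -> A <= 3 * v -> v <> A -> v * s <= 1 ->
  / v <= H2_closed_form v A s.
Proof.
  intros HA Hv HvA Hs; unfold H2_closed_form.
  assert (Hv0 : 0 < v) by lra.
  assert (Hd : 0 < (A - v) ^ 2) by (apply pow2_gt_0; lra).
  assert (E : s + (1 - v * s) * (v + A) / (A - v) ^ 2 - / v
              = (1 - v * s) * (A * (3 * v - A)) / (v * (A - v) ^ 2)) by (field; lra).
  assert (0 <= (1 - v * s) * (A * (3 * v - A)) / (v * (A - v) ^ 2)).
  { apply Rdiv_le_0_compat; [apply Rmult_le_pos; nra | nra]. }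
  lra.
Qed.

Lemma H2_closed_form_ge_const v A s :
  0 <= v -> 3 * v <= A -> 9 / 4 <= A <= 4 -> (1 - v / 6) ^ 2 <= s -> 3 / A <= H2_closed_form v A s.
Proof.
  intros Hv HvA HA Hs; unfold H2_closed_form.
  set (w := (1 - v / 6) ^ 2) in Hs.
  assert (Hd : 0 < (A - v) ^ 2) by (apply pow2_gt_0; lra).
  (* the coefficient of s is A (A - 3 v) / (A - v)^2 >= 0, so s may be replaced by w *)
  assert (Hmono : w + (1 - v * w) * (v + A) / (A - v) ^ 2 <= s + (1 - v * s) * (v + A) / (A - v) ^ 2).
  { assert (E : s + (1 - v * s) * (v + A) / (A - v) ^ 2 - (w + (1 - v * w) * (v + A) / (A - v) ^ 2)
                = (s - w) * (A * (A - 3 * v)) / (A - v) ^ 2) by (field; lra).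
    assert (0 <= (s - w) * (A * (A - 3 * v)) / (A - v) ^ 2)
      by (apply Rdiv_le_0_compat; [apply Rmult_le_pos; nra | exact Hd]).
    lra. }
  set (Q := A ^ 2 - 2 * A + v * (1 - A ^ 2 / 3) + v ^ 2 * A ^ 2 / 36).
  assert (HQ : 0 <= Q).
  { assert (H1 : 0 <= (A / 3 - v) * (A ^ 2 / 3 - 1)) by (apply Rmult_le_pos; nra).
    assert (H2 : 0 <= v ^ 2 * A ^ 2 / 36) by (apply Rmult_le_pos; nra).
    assert (H3 : 0 <= A * - (A ^ 2 - 9 * A + 15)) by (apply Rmult_le_pos; nra).
    unfold Q; nra. }
  assert (E : w + (1 - v * w) * (v + A) / (A - v) ^ 2 - 3 / A = (A - 3 * v) * Q / (A * (A - v) ^ 2))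
    by (unfold w, Q; field; lra).
  assert (0 <= (A - 3 * v) * Q / (A * (A - v) ^ 2))
    by (apply Rdiv_le_0_compat; [apply Rmult_le_pos; lra | nra]).
  lra.
Qed.

Lemma H_alpha_2_ge_inv_sqr u : (PI / 2) ^ 2 / 3 <= u ^ 2 -> / u ^ 2 <= H_alpha 2 u.
Proof.
  intros Hu; assert (Hpi := PI_RGT_0).
  assert (Hu0 : 0 < u ^ 2) by nra.
  assert (Hsin := sinc2_mul_sqr u); assert (Hb := SIN_bound u).
  destruct (Req_dec (u ^ 2) ((PI / 2) ^ 2)) as [Ha | Ha].
  - (* u = +-PI/2: the closed form is unavailable, but sinc2 u = 1 / u^2 already *)
    assert (Hsin1 : sin u ^ 2 = 1).
    { assert (H : (u - PI / 2) * (u + PI / 2) = 0) by lra.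
      destruct (Rmult_integral _ _ H) as [H1 | H1].
      - replace u with (PI / 2) by lra; rewrite sin_PI2; ring.
      - replace u with (- (PI / 2)) by lra; rewrite sin_neg, sin_PI2; ring. }
    rewrite H_alpha_2.
    assert (H0 := sinc2_ge0 (u - PI / 2)); assert (H1 := sinc2_ge0 (u + PI / 2)).
    replace (/ u ^ 2) with (sinc2 u) by (field_simplify_eq; [lra | nra]).
    lra.
  - rewrite H_alpha_2_eq by exact Ha.
    apply H2_closed_form_ge_inv; [nra | lra | exact Ha | nra].
Qed.

Lemma H_alpha_2_ge_const u : u ^ 2 <= (PI / 2) ^ 2 / 3 -> 3 / (PI / 2) ^ 2 <= H_alpha 2 u.
Proof.
  intros Hu; assert (Hpi := PI2_3_2); assert (Hpi4 := PI_4).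
  rewrite H_alpha_2_eq by nra.
  apply H2_closed_form_ge_const; [nra | lra | split; nra | apply sinc2_ge_quadratic; nra].
Qed.

Lemma H_alpha_lower_bound alpha t : 0 < alpha ->
  H_alpha alpha t >= 2 * alpha / Rmax ((alpha * t) ^ 2) (PI ^ 2 / 3).
Proof.
  intros Ha; assert (Hpi := PI_RGT_0).
  rewrite H_alpha_scale; set (u := alpha * t / 2).
  replace ((alpha * t) ^ 2) with (4 * u ^ 2) by (unfold u; field).
  apply Rle_ge; unfold Rmax; destruct (Rle_dec (4 * u ^ 2) (PI ^ 2 / 3)).
  - replace (2 * alpha / (PI ^ 2 / 3)) with (alpha / 2 * (3 / (PI / 2) ^ 2)) by (field; lra).
    apply Rmult_le_compat_l; [lra | apply H_alpha_2_ge_const; lra].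
  - assert (Hu : u <> 0) by (intros H0; apply n; rewrite H0; nra).
    replace (2 * alpha / (4 * u ^ 2)) with (alpha / 2 * / u ^ 2) by (field; exact Hu).
    apply Rmult_le_compat_l; [lra | apply H_alpha_2_ge_inv_sqr; lra].
Qed.

Theorem lemmaA2 (alpha : R) (halpha : 0 < alpha) :
  (forall x : R, 0 <= x ->
     ex_RInt_gen (fun t => H_alpha alpha t * cos (t * x))
                 (at_point 0) (Rbar_locally p_infty)) /\
  (forall x : R, alpha < x -> G_alpha alpha x = 0) /\
  G_alpha alpha 0 = 1 /\
  (forall t : R, H_alpha alpha t >= 2 * alpha / Rmax ((alpha * t) ^ 2) (PI ^ 2 / 3)).
Proof.
  assert (Hpi := PI_RGT_0).
  split; [|split; [|split]].
  - intros x _; eexists; exact (is_RInt_gen_H_alpha_mul_cos alpha x halpha).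
  - intros x Hx; rewrite G_alpha_eq, sinc2_cos_transform_out by lra; ring.
  - rewrite G_alpha_eq, sinc2_cos_transform_0, Rmult_0_r, cos_0 by lra; field; lra.
  - intros t; exact (H_alpha_lower_bound alpha t halpha).
Qed.
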